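(* In the setting described in the context, assume $G$ satisfies Condition 1. Then for every $r\ge0$ there exists a subset $\mathcal{I}_r$ of the non-faulty agents with $|\mathcal{I}_r|\ge\max\{sp(\mathbf{A}),f+1\}$ such that $\pi_i(r)\ge\beta^{\nu}$ for every $i\in\mathcal{I}_r$.
   Context: A synchronous system of $n$ agents communicates over a directed graph $G=(\mathcal{V},\mathcal{E})$, $\mathcal{V}=\{1,\dots,n\}$, without self-loops; $N_i^-=\{j:(j,i)\in\mathcal{E}\}$. At most $f$ agents are Byzantine faulty (may send arbitrary, possibly inconsistent values); $\mathcal{F}$ is the set of faulty agents, $\phi=|\mathcal{F}|\le f$, and the non-faulty agents are indexed $1,\dots,n-\phi$. An assignment matrix $\mathbf{A}\in\mathbb{R}^{k\times n}$ has nonnegative entries and columns summing to $1$; agent $i$ holds $g_i=\sum_{j=1}^k\mathbf{A}_{ji}h_j$ for admissible (convex, $L$-Lipschitz, nonempty compact argmin) $h_1,\dots,h_k:\mathbb{R}\to\mathbb{R}$. Sparsity parameter $sp(\mathbf{A})$: smallest $s$ such that the sum of any $s$ columns of $\mathbf{A}$ is component-wise positive ($n+1$ if the sum of all columns is not). Reduced graph w.r.t. $\mathcal{F}$: subgraph of $G$ obtained by removing the nodes of $\mathcal{F}$ with their edges and then removing up to $f$ additional incoming edges at each remaining node; $R_{\mathcal{F}}$ is the set of all reduced graphs, $\tau=|R_{\mathcal{F}}|$. A source component of a graph is the set of its nodes each having a directed path to every other node of the graph. Condition 1: for every $\mathcal{F}'\subseteq\mathcal{V}$ with $|\mathcal{F}'|\le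 f$, every reduced graph w.r.t. $\mathcal{F}'$ has a source component with at least $\max\{f+1,sp(\mathbf{A})\}$ nodes. Algorithm 2 (run by non-faulty agents, step sizes $\alpha(t)$): arbitrary $x_i(0)$; in iteration $t\ge1$ agent $i$ sends $x_i(t-1)$ to all out-neighbors, receives a multiset of $|N_i^-|$ values (default value for missing messages), discards the $f$ smallest and $f$ largest values, lets $N_i^*(t)$ be the senders of the remaining values with $w_j$ the value from $j$, sets $w_i=x_i(t-1)$, and updates $x_i(t)=\frac{1}{|N_i^*(t)|+1}\sum_{j\in\{i\}\cup N_i^*(t)}w_j-\alpha(t-1)d_i(t-1)$, with $d_i(t-1)$ a (sub)gradient of $g_i$ at $x_i(t-1)$. Known facts: with $\mathbf{x}(t)\in\mathbb{R}^{n-\phi}$ the non-faulty states and $\mathbf{d}(t)$ the vector of $d_i(t)$, $\mathbf{x}(t+1)=\mathbf{M}(t)\mathbf{x}(t)-\alpha(t)\mathbf{d}(t)$ for row-stochastic $(n-\phi)\times(n-\phi)$ matrices $\mathbf{M}(t)$, and there is a constant $0<\beta<1$ such that for every $t$ some reduced graph $\mathcal{H}(t)\in R_{\mathcal{F}}$ with adjacency matrix $\mathbf{H}(t)$ ($\mathbf{H}_{ij}(t)=1$ if $i=j$ or $(j,i)$ is an edge of $\mathcal{H}(t)$, else $0$) satisfies $\mathbf{M}(t)\ge\beta\mathbf{H}(t)$ entrywise. Let $\Phi(t,r)=\mathbf{M}(t)\cdots\mathbf{M}(r)$ for $t\ge r$ and $\nu=\tau(n-\phi)$. Under Condition 1,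 for each $r$ the limit $\lim_{t\to\infty}\Phi(t,r)=\mathbf{1}\pi(r)$ exists, where $\mathbf{1}$ is the all-ones column vector and $\pi(r)=(\pi_1(r),\dots,\pi_{n-\phi}(r))$ is a stochastic row vector. *)

From HB Require Import structures.
From mathcomp Require Import all_boot all_order all_algebra.
From mathcomp Require Import reals.
Set Implicit Arguments. Unset Strict Implicit. Unset Printing Implicit Defensive.
Import Order.TTheory GRing.Theory Num.Theory.
Local Open Scope ring_scope.

(* Agents are 'I_n.  A directed graph on 'I_n is a set of edges;
   the pair (j, i) denotes the edge j -> i. *)
Definition digraph (n : nat) := {set ('I_n * 'I_n)}.

Definition no_self_loops n (G : digraph n) := forall i : 'I_n, (i, i) \notin G.

Definition assignment_matrix (R : realType) k n (A : 'M[R]_(k, n)) :=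
  (forall j i, 0 <= A j i) /\ (forall i, \sum_(j < k) A j i = 1).

(* sp(A): the smallest s such that the sum of any s (distinct) columns of A is
   componentwise positive; n+1 if the sum of all columns is not. *)
Definition sp_ok (R : realType) k n (A : 'M[R]_(k, n)) (s : nat) : bool :=
  [forall S : {set 'I_n}, (#|S| == s) ==> [forall j : 'I_k, 0 < \sum_(i in S) A j i]].

Definition sp (R : realType) k n (A : 'M[R]_(k, n)) : nat :=
  find (sp_ok A) (iota 0 n.+1).

(* E' is a reduced graph of G w.r.t. F (node set ~: F): obtained by removing
   the nodes of F with their edges, and then up to f additional incoming
   edges at each remaining node. *)
Definition reduced_graph n (G : digraph n) (f : nat) (F : {set 'I_n})
    (E' : digraph n) : Prop :=
  E' \subset [set e in G | (e.1 \notin F) && (e.2 \notin F)] /\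
  forall i : 'I_n, i \notin F ->
    (#|[set j : 'I_n | [&& (j, i) \in G, j \notin F & (j, i) \notin E']]| <= f)%N.

Definition reduced_graphs n (G : digraph n) (f : nat) (F : {set 'I_n})
  : {set digraph n} :=
  [set E' : digraph n |
     (E' \subset [set e in G | (e.1 \notin F) && (e.2 \notin F)]) &&
     [forall i : 'I_n, (i \notin F) ==>
        (#|[set j : 'I_n | [&& (j, i) \in G, j \notin F & (j, i) \notin E']]| <= f)%N]].

Definition source_component n (V : {set 'I_n}) (E' : digraph n) : {set 'I_n} :=
  [set i in V | [forall j in V, connect (fun a b => (a, b) \in E') i j]].

Definition condition1 (R : realType) k n (G : digraph n) (f : nat)
    (A : 'M[R]_(k, n)) : Prop :=
  forall F' : {set 'I_n}, (#|F'| <= f)%N ->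
    forall E' : digraph n, reduced_graph G f F' E' ->
      (maxn f.+1 (sp A) <= #|source_component (~: F') E'|)%N.

(* The non-faulty agents are indexed by 'I_#|~: F| (#|~: F| = n - phi). *)
Definition nf_idx n (F : {set 'I_n}) (i : 'I_#|~: F|) : 'I_n :=
  enum_val (A := ~: F) i.

Definition adj_matrix (R : realType) n (F : {set 'I_n}) (E' : digraph n)
  : 'M[R]_#|~: F| :=
  \matrix_(i, j) (if (i == j) || ((@nf_idx n F j, @nf_idx n F i) \in E') then 1 else 0).

Definition row_stochastic (R : realType) m (M : 'M[R]_m) : Prop :=
  (forall i j, 0 <= M i j) /\ (forall i, \sum_(j < m) M i j = 1).

Definition stochastic_row (R : realType) m (p : 'rV[R]_m) : Prop :=
  (forall j, 0 <= p 0 j) /\ \sum_(j < m) p 0 j = 1.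

Fixpoint PhiK (R : realType) m (M : nat -> 'M[R]_m) (r k : nat) : 'M[R]_m :=
  match k with
  | 0 => M r
  | k'.+1 => M (r + k'.+1)%N *m PhiK M r k'
  end.

Definition Phi (R : realType) m (M : nat -> 'M[R]_m) (t r : nat) : 'M[R]_m :=
  PhiK M r (t - r).

Definition Phi_converges (R : realType) m (M : nat -> 'M[R]_m)
    (pi : nat -> 'rV[R]_m) : Prop :=
  forall r (i j : 'I_m) (eps : R), 0 < eps ->
    exists N : nat, forall t, (N <= t)%N -> `|Phi M t r i j - pi r 0 j| < eps.

(* Pigeonhole over the tau reduced graphs: among the nu = tau (n - phi) factors
   M(r + nu - 1), ..., M(r) some reduced graph H is dominated at least n - phi
   times.  Each such factor lets the weight of a node a spread one H-edge
   further (M(t) >= beta H), and every other factor keeps it in place through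
   the diagonal (M(t)_ii >= beta).  For a in the source component of H every
   node lies within n - phi - 1 H-steps of a, so the whole column a of
   M(r + nu - 1) ... M(r) is at least beta^nu.  Multiplying on the left by
   row-stochastic matrices keeps column entries above beta^nu, hence
   Phi(t, r)_aa >= beta^nu for all large t, and so pi_a(r) >= beta^nu.  By
   Condition 1 the source component has at least max(f + 1, sp(A)) nodes. *)

From HB Require Import structures.
From mathcomp Require Import all_boot all_order all_algebra.
From mathcomp Require Import reals zify.
Import Order.TTheory GRing.Theory Num.Theory.
Local Open Scope ring_scope.
Set Implicit Arguments. Unset Strict Implicit.

Fixpoint mxprod (R : realType) m (M : nat -> 'M[R]_m) (r k : nat) : 'M[R]_m :=
  if k is k'.+1 then M (r + k')%N *m mxprod M r k' else 1%:M.

Section Products.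
Variables (R : realType) (m : nat).
Implicit Types (M : nat -> 'M[R]_m) (P Q : 'M[R]_m).

Lemma PhiK_mxprod M r k : PhiK M r k = mxprod M r k.+1.
Proof. by elim: k => [|k IH] /=; rewrite ?addn0 ?mulmx1 // IH. Qed.

Lemma mxprodD M r a b : mxprod M r (a + b) = mxprod M (r + b) a *m mxprod M r b.
Proof. by elim: a => [|a IH] /=; rewrite ?mul1mx // IH mulmxA addnA addnAC. Qed.

Lemma row_stochastic1 : row_stochastic (1%:M : 'M[R]_m).
Proof.
split=> [i j|i]; first by rewrite mxE ler0n.
by rewrite (bigD1 i) //= big1 => [|j /negPf ji]; rewrite mxE ?eqxx ?addr0 // eq_sym ji.
Qed.

Lemma row_stochastic_mul P Q :
  row_stochastic P -> row_stochastic Q -> row_stochastic (P *m Q).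
Proof.
move=> [P0 P1] [Q0 Q1]; split=> [i j|i].
  by rewrite mxE; apply: sumr_ge0 => l _; apply: mulr_ge0.
under eq_bigr => j _ do rewrite mxE.
rewrite exchange_big /= -(P1 i); apply: eq_bigr => l _.
by rewrite -mulr_sumr Q1 mulr1.
Qed.

Lemma row_stochastic_mxprod M r k :
  (forall t, row_stochastic (M t)) -> row_stochastic (mxprod M r k).
Proof.
move=> HM; elim: k => [|k IH] /=; first exact: row_stochastic1.
exact: row_stochastic_mul.
Qed.

Lemma mulmx_col_ge P Q (c : R) i a :
  row_stochastic P -> (forall j, c <= Q j a) -> c <= (P *m Q) i a.
Proof.
move=> [P0 P1] Qc; rewrite mxE -[c]mul1r -(P1 i) mulr_suml.
by apply: ler_sum => j _; apply: ler_wpM2l.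
Qed.

Lemma mulmx_ge_term P Q i l a :
  row_stochastic P -> row_stochastic Q -> P i l * Q l a <= (P *m Q) i a.
Proof.
move=> [P0 _] [Q0 _]; rewrite mxE (bigD1 l) //= lerDl.
by apply: sumr_ge0 => j _; apply: mulr_ge0.
Qed.

End Products.

Lemma limit_ge (R : realDomainType) (u : nat -> R) (l c : R) (N0 : nat) :
  (forall eps, 0 < eps -> exists N : nat, forall t, (N <= t)%N -> `|u t - l| < eps) ->
  (forall t, (N0 <= t)%N -> c <= u t) -> c <= l.
Proof.
move=> ul uc; rewrite leNgt; apply/negP; rewrite -subr_gt0 => /ul [N HN].
have := le_lt_trans (ler_norm _) (HN (maxn N N0) (leq_maxl _ _)).
by rewrite ltrD2r ltNge uc // leq_maxr.
Qed.

Lemma pigeonhole_count (T : finType) (S : {set T}) (g : nat -> T) (m : nat) :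
  (forall s, g s \in S) ->
  exists2 x, x \in S & (m <= \sum_(s < #|S| * m) (g s == x))%N.
Proof.
move=> gS; case: m => [|m]; first by exists (g 0%N).
have S_gt0 : (0 < #|S|)%N by apply/card_gt0P; exists (g 0%N).
apply/exists_inP; apply: contraT; rewrite negb_exists_in => /forall_inP few.
have total : (\sum_(x in S) \sum_(s < #|S| * m.+1) (g s == x) = #|S| * m.+1)%N.
  rewrite exchange_big /= (eq_bigr (fun=> 1%N)) ?sum1_card ?card_ord // => s _.
  rewrite (bigD1 (g s)) //= eqxx big1 // => x /andP [_].
  by rewrite eq_sym => /negPf ->.
have : (\sum_(x in S) \sum_(s < #|S| * m.+1) (g s == x) <= \sum_(x in S) m)%N.
  by apply: leq_sum => x /few; rewrite -ltnNge.
rewrite total sum_nat_const; nia.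
Qed.

Definition reach n (E : digraph n) (x : 'I_n) (c : nat) : {set 'I_n} :=
  iter c (fun S => S :|: [set y | [exists z in S, (z, y) \in E]]) [set x].

Section Reach.
Variables (n : nat) (E : digraph n).
Local Notation edge := (fun a b : 'I_n => (a, b) \in E).

Lemma reachS x c :
  reach E x c.+1 = reach E x c :|: [set y | [exists z in reach E x c, (z, y) \in E]].
Proof. by []. Qed.

Lemma reach_mono x c c' : (c <= c')%N -> reach E x c \subset reach E x c'.
Proof.
move=> /subnK <-; elim: (c' - c)%N => [|d IH] //.
by rewrite addSn reachS (subset_trans IH) ?subsetUl.
Qed.

Lemma mem_reach_path x p : path edge x p -> last x p \in reach E x (size p).
Proof.
elim/last_ind: p => [|p z IH]; first by rewrite /= set11.
rewrite rcons_path last_rcons size_rcons => /andP [/IH Hp ez].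
by rewrite reachS !inE; apply/orP; right; apply/existsP; exists (last x p); rewrite Hp.
Qed.

Lemma connect_reach (V : {set 'I_n}) x y :
  (forall a b, (a, b) \in E -> b \in V) -> x \in V ->
  connect edge x y -> y \in reach E x #|V|.
Proof.
move=> EV xV /connectP [p /shortenP [p' Hp' Hu _] ->].
have p'V : {subset x :: p' <= V}.
  apply/allP; elim: p' x xV Hp' {Hu} => [|z p' IH] x xV /=; first by rewrite xV.
  by case/andP=> /EV zV /(IH z zV) /= /andP [_ ->]; rewrite xV zV.
have size_p' : (size p' < #|V|)%N.
  by rewrite -[(size p').+1]/(size (x :: p')) -(card_uniqP Hu); apply/subset_leq_card/subsetP.
exact: subsetP (reach_mono x (ltnW size_p')) _ (mem_reach_path Hp').
Qed.

End Reach.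

Lemma reduced_graphsP n (G : digraph n) f (F : {set 'I_n}) (E' : digraph n) :
  E' \in reduced_graphs G f F -> reduced_graph G f F E'.
Proof. by rewrite inE => /andP [sub /forallP few]; split=> // i; apply/implyP. Qed.

Lemma nf_idx_onto n (F : {set 'I_n}) x : x \in ~: F -> exists l : 'I_#|~: F|, nf_idx l = x.
Proof. by move=> xF; exists (enum_rank_in xF x); rewrite /nf_idx enum_rankK_in. Qed.

Lemma card_nf_idx_preim n (F B : {set 'I_n}) :
  B \subset ~: F -> #|[set l : 'I_#|~: F| | nf_idx l \in B]| = #|B|.
Proof.
move=> BF; rewrite -(card_imset _ (@enum_val_inj _ _)); apply: eq_card => x.
apply/imsetP/idP => [[l] | xB]; first by rewrite inE => ? ->.
have [l El] := nf_idx_onto (subsetP BF x xB).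
by exists l; [rewrite inE El | rewrite -El].
Qed.

Section ColumnBound.
Variables (R : realType) (n : nat) (F : {set 'I_n}).
Variables (M : nat -> 'M[R]_#|~: F|) (beta : R) (Hf : nat -> digraph n).
Hypotheses (beta_ge0 : 0 <= beta) (M_stoch : forall t, row_stochastic (M t)).
Hypothesis M_ge_adj : forall t i j, beta * adj_matrix R F (Hf t) i j <= M t i j.

Lemma M_ge_beta t i j : (i == j) || ((nf_idx j, nf_idx i) \in Hf t) -> beta <= M t i j.
Proof. by move=> ij; apply: le_trans (M_ge_adj t i j); rewrite mxE ij mulr1. Qed.

Lemma mxprodS_ge r k i l a :
  beta <= M (r + k)%N i l -> beta ^+ k <= mxprod M r k l a ->
  beta ^+ k.+1 <= mxprod M r k.+1 i a.
Proof.
move=> Mil Qla; apply: le_trans (mulmx_ge_term i l a (M_stoch _) (row_stochastic_mxprod _ _ M_stoch)).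
by rewrite exprS ler_pM ?exprn_ge0.
Qed.

Variables (H : digraph n) (r : nat) (a : 'I_#|~: F|).
Hypothesis H_nonfaulty : forall x y, (x, y) \in H -> x \in ~: F.

Lemma mxprod_col_ge k j :
  nf_idx j \in reach H (nf_idx a) (\sum_(s < k) (Hf (r + s)%N == H)) ->
  beta ^+ k <= mxprod M r k j a.
Proof.
elim: k j => [|k IH] j.
  by rewrite big_ord0 inE => /eqP /enum_val_inj ->; rewrite mxE eqxx.
rewrite big_ord_recr /=; case: eqP => [EH | _]; last first.
  by rewrite addn0 => /IH; apply: mxprodS_ge; rewrite M_ge_beta ?eqxx.
rewrite addn1 reachS !inE => /orP [/IH | /existsP [x /andP [xR xj]]].
  by apply: mxprodS_ge; rewrite M_ge_beta ?eqxx.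
have [l El] := nf_idx_onto (H_nonfaulty xj).
by apply: (mxprodS_ge (l := l)); [rewrite M_ge_beta // EH El xj orbT | rewrite IH ?El].
Qed.

End ColumnBound.

Theorem lemma3 (R : realType) (n k f : nat) (G : digraph n)
    (A : 'M[R]_(k, n)) (F : {set 'I_n})
    (M : nat -> 'M[R]_#|~: F|) (beta : R) (pi : nat -> 'rV[R]_#|~: F|) :
  no_self_loops G ->
  assignment_matrix A ->
  (#|F| <= f)%N ->
  condition1 G f A ->
  0 < beta -> beta < 1 ->
  (forall t, row_stochastic (M t)) ->
  (forall t, exists2 E' : digraph n, E' \in reduced_graphs G f F &
       forall i j, beta * adj_matrix R F E' i j <= M t i j) ->
  (forall r, stochastic_row (pi r)) ->
  Phi_converges M pi ->
  forall r : nat,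
    exists I : {set 'I_#|~: F|},
      (maxn (sp A) f.+1 <= #|I|)%N /\
      forall i, i \in I ->
        beta ^+ (#|reduced_graphs G f F| * #|~: F|) <= pi r 0 i.
Proof.
move=> _ _ F_le_f cond1 beta_gt0 _ M_stoch M_ge_red _ Phi_lim r.
set RG := reduced_graphs G f F; set nu := (#|RG| * #|~: F|)%N.
have [Hf HfRG M_ge_adj] : exists2 Hf : nat -> digraph n, (forall t, Hf t \in RG) &
    forall t i j, beta * adj_matrix R F (Hf t) i j <= M t i j.
  have ex t : exists E', (E' \in RG) &&
      [forall i, forall j, beta * adj_matrix R F E' i j <= M t i j].
    have [E' E'RG Hb] := M_ge_red t; exists E'; rewrite E'RG.
    by apply/forallP => i; apply/forallP => j; apply: Hb.
  exists (fun t => xchoose (ex t)) => t; case/andP: (xchooseP (ex t)) => // _ /forallP Hb i j.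
  by move/forallP: (Hb i).
have [H HRG H_count] := pigeonhole_count #|~: F| (fun s => HfRG (r + s)%N).
have [H_sub _] := reduced_graphsP HRG.
have H_edge x y : (x, y) \in H -> (x \in ~: F) && (y \in ~: F).
  by move/(subsetP H_sub); rewrite !inE => /andP [_].
set SC := source_component (~: F) H.
have SC_sub : SC \subset ~: F by apply/subsetP => x; rewrite inE => /andP [].
exists [set l : 'I_#|~: F| | nf_idx l \in SC]; split.
  by rewrite card_nf_idx_preim // maxnC; apply: cond1 (reduced_graphsP HRG).
move=> a; rewrite inE inE => /andP [aF /forallP a_source].
have col j : beta ^+ nu <= mxprod M r nu j a.
  apply: (mxprod_col_ge (ltW beta_gt0) M_stoch M_ge_adj) => [x y /H_edge /andP [] //|].
  apply: (subsetP (reach_mono H _ H_count)).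
  apply: (connect_reach _ aF); first by move=> x y /H_edge /andP [].
  exact: implyP (a_source _) (enum_valP j).
apply: (limit_ge (Phi_lim r a a) (N0 := r + nu)) => t t_ge.
rewrite /Phi PhiK_mxprod -(subnK (_ : nu <= (t - r).+1)%N) ?mxprodD; last by lia.
exact: mulmx_col_ge (row_stochastic_mxprod _ _ M_stoch) col.
Qed.
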